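(* There is no algebra automorphism $\theta$ of $U^+$ with $\theta((z))=(z')$, and none with $\theta((z'))=(z)$.
   Context: $\Bbbk$ is an algebraically closed field of characteristic zero and $q\in\Bbbk^\times$ is not a root of unity. $U^+$ is the $\Bbbk$-algebra generated by $e_1,e_2$ with relations (S1) $e_1^2e_2-(q^2+q^{-2})e_1e_2e_1+e_2e_1^2=0$ and (S2) $e_2^3e_1-(q^2+1+q^{-2})e_2^2e_1e_2+(q^2+1+q^{-2})e_2e_1e_2^2-e_1e_2^3=0$. Set $e_3=e_1e_2-q^2e_2e_1$, $z=e_2e_3-q^2e_3e_2$, $w=e_2e_3-e_3e_2$, $z'=e_1w-q^{-4}we_1$; $(z)$, $(z')$ are the two-sided ideals they generate (both central elements). *)

From HB Require Import structures.
From mathcomp Require Import all_boot all_order all_algebra.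
Set Implicit Arguments. Unset Strict Implicit. Unset Printing Implicit Defensive.
Import GRing.Theory.
Local Open Scope ring_scope.

Definition Urels (k : fieldType) (q : k) (A : algType k) (a b : A) : Prop :=
  (a * a * b - (q ^+ 2 + q ^- 2) *: (a * b * a) + b * a * a = 0) /\
  (b ^+ 3 * a - (q ^+ 2 + 1 + q ^- 2) *: (b ^+ 2 * a * b)
     + (q ^+ 2 + 1 + q ^- 2) *: (b * a * b ^+ 2) - a * b ^+ 3 = 0).

(* (A, e1, e2) is U^+: the k-algebra generated by e1, e2 subject to (S1), (S2),
   given by its universal property (presentation by generators and relations). *)
Definition is_Uplus (k : fieldType) (q : k) (A : algType k) (e1 e2 : A) : Prop :=
  Urels q e1 e2 /\
  forall (B : algType k) (b1 b2 : B), Urels q b1 b2 ->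
    exists f : {lrmorphism A -> B},
      [/\ f e1 = b1, f e2 = b2 &
          forall g : {lrmorphism A -> B}, g e1 = b1 -> g e2 = b2 ->
            forall x, g x = f x].

Section Elements.
Variables (k : fieldType) (q : k) (A : algType k) (e1 e2 : A).
Definition e3 : A := e1 * e2 - q ^+ 2 *: (e2 * e1).
Definition zU : A := e2 * e3 - q ^+ 2 *: (e3 * e2).
Definition wU : A := e2 * e3 - e3 * e2.
Definition zU' : A := e1 * wU - q ^- 4 *: (wU * e1).
End Elements.

Definition ideal_gen (R : ringType) (x : R) (y : R) : Prop :=
  exists s : seq (R * R), y = \sum_(p <- s) p.1 * x * p.2.

Definition maps_onto (R : ringType) (f : R -> R) (I J : R -> Prop) : Prop :=
  forall y, J y <-> exists x, I x /\ f x = y.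

(* The assignment e1 |-> eps, e2 |-> 1 into the dual numbers k[eps]/(eps^2)
   satisfies (S1) and (S2), so it extends to a morphism chi from U^+ into a
   commutative algebra.  Every morphism into a commutative algebra kills w,
   hence z' and the ideal (z'), whereas chi z = (1 - q^2)^2 eps <> 0.  An
   automorphism theta carrying (z) onto (z') puts theta z in (z'), so that
   chi o theta^-1 kills theta z, i.e. chi z = 0; one carrying (z') onto (z)
   writes z = theta x with x in (z'), so that chi z = (chi o theta) x = 0. *)
From HB Require Import structures.
From mathcomp Require Import all_boot all_order all_algebra ring.
Import GRing.Theory.
Local Open Scope ring_scope.
Set Implicit Arguments.
Unset Strict Implicit.
Unset Printing Implicit Defensive.

Section DualNumbers.
Variable R : comNzRingType.

Definition dual := (R^o * R^o)%type.
HB.instance Definition _ := GRing.Lmodule.copy dual (R^o * R^o)%type.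

Definition dual_mul (x y : dual) : dual := (x.1 * y.1, x.1 * y.2 + x.2 * y.1).

Lemma dual_mulA : associative dual_mul.
Proof. by move=> [a b] [c d] [e f]; congr pair => /=; ring. Qed.

Lemma dual_mulC : commutative dual_mul.
Proof. by move=> [a b] [c d]; congr pair => /=; ring. Qed.

Lemma dual_mul1 : left_id ((1, 0) : dual) dual_mul.
Proof. by move=> [a b]; congr pair => /=; ring. Qed.

Lemma dual_mulDl : left_distributive dual_mul +%R.
Proof. by move=> [a b] [c d] [e f]; congr pair => /=; ring. Qed.

Lemma dual_one_neq0 : ((1, 0) : dual) != 0.
Proof. by rewrite xpair_eqE oner_eq0. Qed.

HB.instance Definition _ := GRing.Zmodule_isComNzRing.Build dual
  dual_mulA dual_mulC dual_mul1 dual_mulDl dual_one_neq0.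

(* Without the cast, [a *: x] is typed in [R^o * R^o] and the product on the
   right is elaborated as the componentwise one. *)
Lemma dual_scalerAl (a : R) (x y : dual) : a *: (x * y) = (a *: x : dual) * y.
Proof. by move: x y => [b c] [d e]; congr pair; rewrite /= ?scalerDr !scalerAl. Qed.

HB.instance Definition _ := GRing.Lmodule_isLalgebra.Build R dual dual_scalerAl.
HB.instance Definition _ := GRing.Lalgebra_isComAlgebra.Build R dual.

Definition eps : dual := (0, 1).

Lemma eps_mul_eps : eps * eps = 0.
Proof. by congr pair => /=; ring. Qed.

Lemma scale_eps_eq0 (a : R) : (a *: eps == 0) = (a == 0).
Proof. by rewrite xpair_eqE /= scaler0 eqxx -[a%:A]/(a * 1) mulr1. Qed.

End DualNumbers.

Lemma ideal_gen_self (R : nzRingType) (x : R) : ideal_gen x x.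
Proof. by exists [:: (1, 1)]; rewrite big_seq1 mul1r mulr1. Qed.

Lemma ideal_gen_rmorph_eq0 (R S : nzRingType) (f : {rmorphism R -> S}) (x y : R) :
  f x = 0 -> ideal_gen x y -> f y = 0.
Proof.
move=> fx0 [s ->]; rewrite rmorph_sum big1 // => p _.
by rewrite !rmorphM fx0 mulr0 mul0r.
Qed.

Section GeneratorImages.
Variables (k : fieldType) (q : k).

Section LRMorphism.
Variables (A B : algType k) (f : {lrmorphism A -> B}).

(* Stated through the same coercion of [f] to a function: after rewriting with
   [rmorphM f], [f] appears through its ring-morphism projection, where
   [linearZZ f] no longer matches. *)
Let lrmorphB : {morph f : x y / x - y} := rmorphB f.
Let lrmorphM : {morph f : x y / x * y} := rmorphM f.
Let lrmorphZ : scalable f := linearZZ f.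

Lemma lrmorph_zU (a b : A) : f (zU q a b) = zU q (f a) (f b).
Proof. by rewrite /zU /e3 !(lrmorphB, lrmorphM, lrmorphZ). Qed.

Lemma lrmorph_zU' (a b : A) : f (zU' q a b) = zU' q (f a) (f b).
Proof. by rewrite /zU' /wU /e3 !(lrmorphB, lrmorphM, lrmorphZ). Qed.

End LRMorphism.

Variable B : comAlgType k.

Lemma Urels_comm (a b : B) : a * a = 0 -> Urels q a b.
Proof.
move=> a2; split.
  by rewrite [a * b * a]mulrAC -[b * a * a]mulrA a2 !(mul0r, mulr0) scaler0 subrr addr0.
pose c : B := (q ^+ 2 + 1 + q ^- 2)%:A.
have cE (x : B) : (q ^+ 2 + 1 + q ^- 2) *: x = c * x by rewrite mulr_algl.
by rewrite !cE; clearbody c; ring.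
Qed.

Lemma zU'_comm (a b : B) : zU' q a b = 0.
Proof. by rewrite /zU' /wU [e3 q a b * b]mulrC subrr mulr0 mul0r scaler0 subrr. Qed.

Lemma zU_comm (a b : B) : zU q a b = (1 - q ^+ 2) ^+ 2 *: (a * b ^+ 2).
Proof.
pose s : B := (q ^+ 2)%:A.
have sE (x : B) : q ^+ 2 *: x = s * x by rewrite mulr_algl.
have -> : (1 - q ^+ 2) ^+ 2 *: (a * b ^+ 2) = (1 - s) ^+ 2 * (a * b ^+ 2).
  by rewrite -mulr_algl -in_algE rmorphXn rmorphB rmorph1.
by rewrite /zU /e3 !sE; clearbody s; ring.
Qed.

End GeneratorImages.

Lemma bij_lrmorphism_inv (k : fieldType) (A B : algType k) (f : {lrmorphism A -> B}) :
  bijective f -> exists g : {lrmorphism B -> A}, cancel f g.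
Proof.
case=> g fK gK.
pose gM := GRing.isMonoidMorphism.Build _ _ g (can2_monoid_morphism fK gK).
pose gL := GRing.isLinear.Build _ _ _ _ g (can2_linear fK gK).
by exists (HB.pack_for {lrmorphism B -> A} g gM gL).
Qed.

Section NoIdealAutomorphism.
Variables (k : fieldType) (q : k) (A : algType k) (e1 e2 : A).
Variables (B : comAlgType k) (chi : {lrmorphism A -> B}).
Hypothesis chi_zU : chi (zU q e1 e2) != 0.

Let lrmorph_ideal_zU'_eq0 (phi : {lrmorphism A -> B}) (y : A) :
  ideal_gen (zU' q e1 e2) y -> phi y = 0.
Proof. by apply: ideal_gen_rmorph_eq0; rewrite -[LHS]/(phi _) lrmorph_zU' zU'_comm. Qed.

Lemma no_bij_lrmorphism_zU_onto_zU' :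
  ~ exists theta : {lrmorphism A -> A}, bijective theta /\
      maps_onto theta (ideal_gen (zU q e1 e2)) (ideal_gen (zU' q e1 e2)).
Proof.
case=> theta [/bij_lrmorphism_inv [psi thetaK] theta_onto].
have /theta_onto : exists x, ideal_gen (zU q e1 e2) x /\ theta x = theta (zU q e1 e2).
  by exists (zU q e1 e2); split; first exact: ideal_gen_self.
by move/(lrmorph_ideal_zU'_eq0 (chi \o psi)); rewrite /= thetaK; apply/eqP.
Qed.

Lemma no_lrmorphism_zU'_onto_zU :
  ~ exists theta : {lrmorphism A -> A},
      maps_onto theta (ideal_gen (zU' q e1 e2)) (ideal_gen (zU q e1 e2)).
Proof.
case=> theta theta_onto.
have [x [x_zU' theta_x]] := (theta_onto _).1 (ideal_gen_self (zU q e1 e2)).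
move: chi_zU; rewrite -theta_x -[chi (theta x)]/((chi \o theta) x).
by rewrite lrmorph_ideal_zU'_eq0 ?eqxx.
Qed.

End NoIdealAutomorphism.

Theorem proposition3p3 (k : closedFieldType) (Hchar : [pchar k] =i pred0)
  (q : k) (Hq0 : q != 0) (Hq : forall n : nat, (0 < n)%N -> q ^+ n != 1)
  (A : algType k) (e1 e2 : A) (HU : is_Uplus q e1 e2) :
  (~ exists theta : {lrmorphism A -> A}, bijective theta /\
       maps_onto theta (ideal_gen (zU q e1 e2)) (ideal_gen (zU' q e1 e2))) /\
  (~ exists theta : {lrmorphism A -> A}, bijective theta /\
       maps_onto theta (ideal_gen (zU' q e1 e2)) (ideal_gen (zU q e1 e2))).
Proof.
have [chi [chi_e1 chi_e2 _]] := HU.2 _ _ _ (Urels_comm q 1 (eps_mul_eps k)).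
have chi_zU : chi (zU q e1 e2) != 0.
  rewrite lrmorph_zU chi_e1 chi_e2 zU_comm expr1n mulr1 scale_eps_eq0.
  by rewrite expf_eq0 subr_eq0 eq_sym; apply: Hq.
split; first exact: no_bij_lrmorphism_zU_onto_zU' chi_zU.
by case=> theta [_ theta_onto]; apply: no_lrmorphism_zU'_onto_zU chi_zU _; exists theta.
Qed.
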